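(* Consider the nonlinear event-triggered setting described in the context, with a smooth class $\mathcal K_\infty$ function $\beta$, $\sigma\in(0,1)$ and $\theta\ge 0$, and execution times generated by the dynamic event generator. Then for all $t\in[0,t_\infty)$, $$\eta(t)+\theta\big(\sigma\alpha(\|x(t)\|)-\gamma(\|e(t)\|)\big)\ge 0\quad\text{and}\quad \eta(t)\ge 0.$$
   Context: Let $f:\mathbb{R}^n\times\mathbb{R}^m\to\mathbb{R}^n$ and a feedback $k:\mathbb{R}^n\to\mathbb{R}^m$ be given. A class $\mathcal K_\infty$ function is a continuous, strictly increasing $\alpha:[0,\infty)\to[0,\infty)$ with $\alpha(0)=0$ and $\alpha(r)\to\infty$ as $r\to\infty$. Assume there is a smooth $V:\mathbb{R}^n\to[0,\infty)$ and class $\mathcal K_\infty$ functions $\underline\alpha,\overline\alpha,\alpha,\gamma$ such that for all $x,e\in\mathbb{R}^n$: $\underline\alpha(\|x\|)\le V(x)\le\overline\alpha(\|x\|)$ and $\nabla V(x)\cdot f(x,k(x+e))\le-\alpha(\|x\|)+\gamma(\|e\|)$ (ISS-Lyapunov function for $\dot x=f(x,k(x+e))$). The plant is $\dot x=f(x,u)$ with sample-and-hold input $u(t)=k(x(t_i))$ for $t\in[t_i,t_{i+1})$, where $(t_i)_{i\in\mathbb I}$ is an increasing sequence of execution times; $e(t)=x(t_i)-x(t)$ for $t\in[t_i,t_{i+1})$, so $\dot x=f(x,k(x+e))$. If there are infinitely many executions, $\mathbb I=\mathbb N$ and $t_\infty=\lim t_i$; if finitely many ($\mathbb I=\{0,\dots,I\}$),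 $t_\infty=t_{I+1}=+\infty$. For a function $g$, $g(t^-)$ denotes the left limit at $t$. Dynamic event generator: with design parameters a smooth class $\mathcal K_\infty$ function $\beta$, $\sigma\in(0,1)$ and $\theta\ge0$, an internal variable $\eta$ satisfies $\dot\eta=-\beta(\eta)+\sigma\alpha(\|x\|)-\gamma(\|e\|)$, $\eta(0)=0$, and execution times are $t_0=0$, $t_{i+1}=\inf\{t>t_i:\ \eta(t)+\theta(\sigma\alpha(\|x(t)\|)-\gamma(\|e(t^-)\|))\le 0\}$. It is assumed that $x(t_i)\neq 0$ for all $i\in\mathbb I$. *)

From mathcomp Require Import all_boot.
From Stdlib Require Import Reals.
Open Scope R_scope.

Definition vec (n : nat) := 'I_n -> R.

Definition vadd {n} (u v : vec n) : vec n := fun j => u j + v j.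
Definition vsub {n} (u v : vec n) : vec n := fun j => u j - v j.
Definition vzero {n} : vec n := fun _ => 0.

Definition vnorm {n} (v : vec n) : R :=
  sqrt (\big[Rplus/0]_(j < n) (v j * v j)).

Definition vshift {n} (x : vec n) (i : 'I_n) (h : R) : vec n :=
  fun j => if j == i then x j + h else x j.

Definition vdot {n} (u v : vec n) : R := \big[Rplus/0]_(j < n) (u j * v j).

Definition has_partial {n} (F : vec n -> R) (i : 'I_n) (x : vec n) (d : R) :=
  derivable_pt_lim (fun h => F (vshift x i h)) 0 d.

Definition vcontinuous {n} (F : vec n -> R) :=
  forall x eps, 0 < eps -> exists delta, 0 < delta /\
    forall y, vnorm (vsub y x) < delta -> Rabs (F y - F x) < eps.

(* F : R^n -> R is smooth (C^infinity): all iterated partial derivatives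
   exist and are continuous.  D l is the iterated partial derivative along
   the list of directions l. *)
Definition smooth_vec {n} (F : vec n -> R) :=
  exists D : seq 'I_n -> vec n -> R,
    D [::] = F /\
    (forall l, vcontinuous (D l)) /\
    (forall l i x, has_partial (D l) i x (D (i :: l) x)).

Definition smooth_R (b : R -> R) :=
  exists D : nat -> R -> R,
    D O = b /\ forall k t, derivable_pt_lim (D k) t (D (S k) t).

Definition class_Kinf (a : R -> R) :=
  a 0 = 0 /\
  (forall r, 0 <= r -> forall eps, 0 < eps -> exists delta, 0 < delta /\
     forall s, 0 <= s -> Rabs (s - r) < delta -> Rabs (a s - a r) < eps) /\
  (forall r s, 0 <= r -> r < s -> a r < a s) /\
  (forall M, exists r, 0 <= r /\ M < a r).

Definition left_lim {n} (g : R -> vec n) (t : R) (l : vec n) :=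
  forall eps, 0 < eps -> exists delta, 0 < delta /\
    forall s, t - delta < s < t -> vnorm (vsub (g s) l) < eps.

Definition vcont_at {n} (g : R -> vec n) (t : R) :=
  forall eps, 0 < eps -> exists delta, 0 < delta /\
    forall s, 0 <= s -> Rabs (s - t) < delta -> vnorm (vsub (g s) (g t)) < eps.

Definition cont_at (g : R -> R) (t : R) :=
  forall eps, 0 < eps -> exists delta, 0 < delta /\
    forall s, 0 <= s -> Rabs (s - t) < delta -> Rabs (g s - g t) < eps.

Definition is_inf (S : R -> Prop) (a : R) :=
  (forall s, S s -> a <= s) /\
  (forall b, (forall s, S s -> b <= s) -> b <= a).

(* Execution-time bookkeeping.  N = None : infinitely many executions,
   index set = nat.  N = Some I : executions t_0,...,t_I, and t_{I+1} = +oo. *)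
Definition in_I (N : option nat) (i : nat) : Prop :=
  match N with None => True | Some last => (i <= last)%nat end.

Definition has_next (N : option nat) (i : nat) : Prop :=
  match N with None => True | Some last => (i < last)%nat end.

Definition before_next (N : option nat) (tt : nat -> R) (i : nat) (t : R) : Prop :=
  match N with None => t < tt (S i) | Some last => (last <= i)%nat \/ t < tt (S i) end.

(* t < t_oo, where t_oo = lim t_i (infinite case) or +oo (finite case);
   since (t_i) is increasing, t < lim t_i iff t < t_i for some i. *)
Definition before_tinf (N : option nat) (tt : nat -> R) (t : R) : Prop :=
  match N with None => exists i, t < tt i | Some _ => True end.

From mathcomp Require Import all_boot zify.
From Stdlib Require Import Reals Lra Psatz Lia Classical.
Open Scope R_scope.

(* Write  Phi(t) = eta(t) + theta (sigma alpha(|x(t)|) - gamma(|e(t)|)).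
   1. Between two executions, t_i < t < t_{i+1}, the error e is continuous, so e(t^-) = e(t);
      if Phi(t) <= 0 then t would belong to the set whose infimum is t_{i+1}, which is
      impossible.  Hence Phi > 0 on (t_i, t_{i+1}).
   2. At an execution time e(t_i) = 0, so Phi(t_i) >= eta(t_i).
   3. Where eta < 0 on (t_i, t_{i+1}), Phi > 0 forces sigma alpha - gamma > 0, hence
      eta' >= -beta(eta) >= C eta near 0 (beta is differentiable with beta(0) = 0). *)

Lemma vnorm_ge0 {n} (v : vec n) : 0 <= vnorm v.
Proof. apply sqrt_pos. Qed.

Lemma vnorm_sub_cancel {n} (a u v : vec n) :
  vnorm (vsub (vsub a u) (vsub a v)) = vnorm (vsub u v).
Proof. unfold vnorm, vsub; f_equal; apply eq_bigr; intros; ring. Qed.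

Lemma vnorm_sub_diag {n} (a : vec n) : vnorm (vsub a a) = 0.
Proof.
  unfold vnorm, vsub.
  replace (\big[Rplus/0]_(j < n) ((a j - a j) * (a j - a j))) with 0; [apply sqrt_0|].
  symmetry; apply (big_ind (fun s => s = 0)); [reflexivity | intros ? ? -> ->; ring |].
  intros; ring.
Qed.

Lemma Kinf_nonneg {a : R -> R} : class_Kinf a -> forall r, 0 <= r -> 0 <= a r.
Proof.
  intros [Ha0 [_ [Hinc _]]] r Hr.
  destruct (Req_dec r 0) as [->|Hne]; [lra|].
  rewrite <- Ha0; left; apply Hinc; lra.
Qed.

Lemma smooth_R_derivable {b : R -> R} : smooth_R b -> forall t, exists d, derivable_pt_lim b t d.
Proof.
  intros [D [HD0 HD]] t; exists (D 1%nat t); rewrite <- HD0; apply HD.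
Qed.

Lemma derivable_linear_bound_left (b : R -> R) (d : R) :
  b 0 = 0 -> derivable_pt_lim b 0 d ->
  exists C d0, 0 < d0 /\ forall y, -d0 < y <= 0 -> C * y <= - b y.
Proof.
  intros Hb0 Hd.
  destruct (Hd 1 Rlt_0_1) as [del Hdel].
  exists (1 - d), del; split; [apply cond_pos|].
  intros y [Hy1 Hy2].
  destruct (Req_dec y 0) as [->|Hne]; [rewrite Hb0; lra|].
  specialize (Hdel y Hne ltac:(rewrite Rabs_left; lra)).
  rewrite Rplus_0_l Hb0 Rminus_0_r in Hdel.
  apply Rabs_def2 in Hdel.
  (* b(y) = q y with q > d - 1 *)
  set (q := b y / y) in Hdel.
  replace (b y) with (q * y) by (unfold q; field; exact Hne).
  nra.
Qed.

Lemma last_nonneg_time (y : R -> R) (a b : R) :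
  0 <= a <= b -> (forall r, a <= r <= b -> cont_at y r) -> 0 <= y a -> y b < 0 ->
  exists tau, a <= tau < b /\ 0 <= y tau /\ forall r, tau < r <= b -> y r < 0.
Proof.
  intros Hab Hcont Hya Hyb.
  set (E := fun r => a <= r <= b /\ 0 <= y r).
  destruct (completeness E) as [tau [Hub Hlub]].
  { exists b; intros r [Hr _]; lra. }
  { exists a; split; [lra | exact Hya]. }
  assert (Htau1 : a <= tau) by (apply Hub; split; [lra | exact Hya]).
  assert (Htau2 : tau <= b) by (apply Hlub; intros r [Hr _]; lra).
  assert (Hafter : forall r, tau < r <= b -> y r < 0).
  { intros r Hr; apply Rnot_le_lt; intro Hyr.
    assert (r <= tau) by (apply Hub; split; [lra | exact Hyr]); lra. }
  (* by continuity, y(tau) >= 0: otherwise y < 0 on a neighbourhood of tau *)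
  assert (Hytau : 0 <= y tau).
  { apply Rnot_lt_le; intro Hneg.
    destruct (Hcont tau ltac:(lra) (- y tau) ltac:(lra)) as [d [Hd Hclose]].
    assert (Hbound : tau <= tau - d / 2); [|lra].
    apply Hlub; intros r [Hr Hyr].
    apply Rnot_lt_le; intro Hrd.
    assert (r <= tau) by (apply Hub; split; assumption).
    specialize (Hclose r ltac:(lra) ltac:(apply Rabs_def1; lra)).
    apply Rabs_def2 in Hclose; lra. }
  exists tau; repeat split; try lra; [|exact Hafter].
  destruct (Req_dec tau b) as [->|]; lra.
Qed.

(* Gronwall step: if y' >= C y on [a, b], then r |-> y(r) exp(C (b - r)) is nondecreasing. *)
Lemma weighted_growth (y y' : R -> R) (a b C : R) :
  a < b -> (forall r, a <= r <= b -> derivable_pt_lim y r (y' r)) ->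
  (forall r, a <= r <= b -> C * y r <= y' r) ->
  y a * exp (C * (b - a)) <= y b.
Proof.
  intros Hab Hder Hlow.
  set (g := fun r => exp (C * (b - r))).
  set (w' := fun r => y' r * g r + y r * (g r * - C)).
  assert (Hw : forall r, a <= r <= b -> derivable_pt_lim (fun s => y s * g s) r (w' r)).
  { intros r Hr.
    assert (Harg : derivable_pt_lim (fun s => C * (b - s)) r (- C)).
    { replace (- C) with (C * (0 - 1)) by ring.
      apply (derivable_pt_lim_scal (fun s => b - s)).
      apply (derivable_pt_lim_minus (fun _ => b) id), derivable_pt_lim_id.
      apply derivable_pt_lim_const. }
    apply (derivable_pt_lim_mult y g); [exact (Hder r Hr)|].
    exact (derivable_pt_lim_comp _ exp r _ _ Harg (derivable_pt_lim_exp _)). }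
  destruct (MVT_cor2 _ w' a b Hab Hw) as [c [Hmvt Hc]].
  (* w'(c) = g(c) (y'(c) - C y(c)) >= 0 *)
  assert (Hw'c : 0 <= w' c).
  { unfold w'; pose proof (exp_pos (C * (b - c))) as Hg; fold (g c) in Hg.
    pose proof (Hlow c ltac:(lra)); nra. }
  assert (Hgb : g b = 1) by (unfold g; rewrite Rminus_diag Rmult_0_r; apply exp_0).
  rewrite Hgb in Hmvt; fold (g a).
  assert (0 <= w' c * (b - a)) by (apply Rmult_le_pos; lra); lra.
Qed.

(* Right-continuity at tau with y(tau) >= 0 and y' >= C y on (tau, b] prevent y(b) < 0:
   otherwise y(r) <= y(b) exp(-C (b - r)) would stay uniformly negative for r near tau. *)
Lemma linear_lower_bound_keeps_nonneg (y y' : R -> R) (tau b C : R) :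
  0 <= tau < b -> cont_at y tau -> 0 <= y tau ->
  (forall r, tau < r <= b -> derivable_pt_lim y r (y' r)) ->
  (forall r, tau < r <= b -> C * y r <= y' r) -> 0 <= y b.
Proof.
  intros Htb Hcont Hytau Hder Hlow.
  apply Rnot_lt_le; intro Hyb.
  set (M := exp (Rabs C * (b - tau))).
  assert (HM : 0 < M) by apply exp_pos.
  assert (Hneg : forall r, tau < r < b -> y r <= y b / M).
  { intros r Hr.
    assert (Hw := weighted_growth y y' r b C ltac:(lra)
                    (fun s Hs => Hder s ltac:(lra)) (fun s Hs => Hlow s ltac:(lra))).
    set (E := exp (C * (b - r))) in Hw.
    assert (HE : 0 < E) by apply exp_pos.
    assert (HEM : E <= M).
    { assert (Harg : C * (b - r) <= Rabs C * (b - tau)).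
      { pose proof (Rle_abs C); pose proof (Rabs_pos C); nra. }
      destruct (Rle_lt_or_eq_dec _ _ Harg) as [Hlt|Heq];
        [left; apply exp_increasing, Hlt | right; unfold E, M; rewrite Heq; reflexivity]. }
    (* y(r) <= y(b) / E <= y(b) / M since y(b) < 0 *)
    apply (Rmult_le_reg_r (E * M)); [nra|].
    replace (y b / M * (E * M)) with (y b * E) by (field; lra).
    nra. }
  assert (Heps : 0 < - (y b / M)) by (apply Ropp_0_gt_lt_contravar, Rdiv_neg_pos; lra).
  destruct (Hcont _ Heps) as [d [Hd Hclose]].
  set (r := tau + Rmin d (b - tau) / 2).
  assert (Hmin : 0 < Rmin d (b - tau)) by (apply Rmin_glb_lt; lra).
  pose proof (Rmin_l d (b - tau)); pose proof (Rmin_r d (b - tau)).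
  specialize (Hclose r ltac:(unfold r; lra) ltac:(apply Rabs_def1; unfold r; lra)).
  apply Rabs_def2 in Hclose.
  pose proof (Hneg r ltac:(unfold r; lra)); lra.
Qed.

Lemma nonneg_preserved (y y' : R -> R) (a b C d0 : R) :
  0 <= a <= b -> 0 < d0 ->
  (forall r, a <= r <= b -> cont_at y r) ->
  (forall r, a < r <= b -> derivable_pt_lim y r (y' r)) ->
  (forall r, a < r <= b -> -d0 < y r < 0 -> C * y r <= y' r) ->
  0 <= y a -> 0 <= y b.
Proof.
  intros Hab Hd0 Hcont Hder Hlow Hya.
  apply Rnot_lt_le; intro Hyb.
  destruct (last_nonneg_time y a b Hab Hcont Hya Hyb) as [tau [Htau [Hytau Hafter]]].
  (* shrink the interval so that y stays above -d0 *)
  destruct (Hcont tau ltac:(lra) d0 Hd0) as [d [Hd Hclose]].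
  pose proof (Rmin_l b (tau + d / 2)); pose proof (Rmin_r b (tau + d / 2)).
  assert (Hb'1 : tau < Rmin b (tau + d / 2)) by (apply Rmin_glb_lt; lra).
  set (b' := Rmin b (tau + d / 2)) in *.
  assert (Hyb' : 0 <= y b').
  { apply (linear_lower_bound_keeps_nonneg y y' tau b' C);
      [lra | apply Hcont; lra | exact Hytau | intros r Hr; apply Hder; lra |].
    intros r Hr; apply Hlow; [lra|]; split; [|apply Hafter; lra].
    specialize (Hclose r ltac:(lra) ltac:(apply Rabs_def1; lra)).
    apply Rabs_def2 in Hclose; lra. }
  pose proof (Hafter b' ltac:(lra)); lra.
Qed.

Lemma nonneg_at_right_end (y : R -> R) (a b : R) :
  0 <= a < b -> cont_at y b -> (forall r, a <= r < b -> 0 <= y r) -> 0 <= y b.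
Proof.
  intros Hab Hcont Hy; apply Rnot_lt_le; intro Hneg.
  destruct (Hcont (- y b) ltac:(lra)) as [d [Hd Hclose]].
  pose proof (Rmax_l a (b - d / 2)); pose proof (Rmax_r a (b - d / 2)).
  assert (Hrb : Rmax a (b - d / 2) < b) by (apply Rmax_lub_lt; lra).
  set (r := Rmax a (b - d / 2)) in *.
  specialize (Hclose r ltac:(lra) ltac:(apply Rabs_def1; lra)).
  apply Rabs_def2 in Hclose.
  pose proof (Hy r ltac:(lra)); lra.
Qed.

Lemma before_next_tinf {N tt} i s : before_next N tt i s -> before_tinf N tt s.
Proof. destruct N; simpl; [trivial | intros; exists (S i); assumption]. Qed.

Lemma before_next_mono {N tt} i r s :
  r <= s -> before_next N tt i s -> before_next N tt i r.
Proof.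
  destruct N; simpl; intros Hrs Hbn; [destruct Hbn as [Hl|Hl]; [left | right] |]; auto; lra.
Qed.

Lemma before_next_of_lt {N tt} i s : s < tt (S i) -> before_next N tt i s.
Proof. destruct N; simpl; auto. Qed.

Lemma before_next_lt {N tt} i s : has_next N i -> before_next N tt i s -> s < tt (S i).
Proof. destruct N; simpl; [intros Hn [Hl|Hl]; [lia | exact Hl] | auto]. Qed.

Lemma next_index {N} i : in_I N (S i) -> in_I N i /\ has_next N i.
Proof. destruct N; simpl; split; auto; lia. Qed.

Section ExecutionTimes.
Context {N : option nat} {tt : nat -> R}.
Hypothesis Ht0 : tt O = 0.
Hypothesis Hincr : forall i, has_next N i -> tt i < tt (S i).

Lemma executions_nonneg i : in_I N i -> 0 <= tt i.
Proof.
  induction i as [|i IH]; intros Hi; [lra|].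
  destruct (next_index i Hi) as [Hi' Hn].
  pose proof (Hincr i Hn); pose proof (IH Hi'); lra.
Qed.

Lemma execution_before_tinf j : before_tinf N tt (tt j).
Proof. destruct N; simpl; [trivial | exists (S j); apply Hincr; exact I]. Qed.

Lemma before_next_start i : in_I N i -> before_next N tt i (tt i).
Proof.
  destruct N as [last|]; simpl; intros Hi; [|apply Hincr; exact I].
  destruct (Nat.lt_ge_cases i last); [right; apply Hincr; simpl; lia | left; lia].
Qed.

End ExecutionTimes.

Lemma find_interval (tt : nat -> R) t k :
  tt O <= t -> t < tt k -> exists i, (i < k)%nat /\ tt i <= t < tt (S i).
Proof.
  intros H0; induction k as [|k IH]; intros Hk; [lra|].
  destruct (Rlt_or_le t (tt k)) as [Hl|Hl].
  - destruct (IH Hl) as [i [Hi1 Hi2]]; exists i; split; [lia | lra].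
  - exists k; split; [lia | lra].
Qed.

Lemma execution_interval {N tt} t :
  tt O <= t -> before_tinf N tt t ->
  exists i, in_I N i /\ tt i <= t /\ before_next N tt i t.
Proof.
  intros H0 Htinf; destruct N as [last|]; simpl in *.
  - destruct (Rle_lt_dec (tt last) t) as [Hl|Hl].
    + exists last; repeat split; [lia | lra | left; lia].
    + destruct (find_interval tt t last H0 Hl) as [i [Hi [Hti Htn]]].
      exists i; repeat split; [lia | lra | right; lra].
  - destruct Htinf as [k Hk].
    destruct (find_interval tt t k H0 Hk) as [i [_ [Hti Htn]]].
    exists i; repeat split; lra.
Qed.

Section DynamicEventGenerator.
Context {n : nat} {x e : R -> vec n} {eta : R -> R} {alpha gamma beta : R -> R}
  {sigma theta : R} {N : option nat} {tt : nat -> R}.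
Hypothesis Halpha : forall r, 0 <= r -> 0 <= alpha r.
Hypothesis Hgamma0 : gamma 0 = 0.
Hypothesis Hbeta0 : beta 0 = 0.
Hypothesis Hbeta_der : exists d, derivable_pt_lim beta 0 d.
Hypothesis Hsigma : 0 <= sigma.
Hypothesis Htheta : 0 <= theta.
Hypothesis Ht0 : tt O = 0.
Hypothesis Hincr : forall i, has_next N i -> tt i < tt (S i).
Hypothesis Hxcont : forall t, 0 <= t -> before_tinf N tt t -> vcont_at x t.
Hypothesis He : forall i t, in_I N i -> tt i <= t -> before_next N tt i t ->
  e t = vsub (x (tt i)) (x t).
Hypothesis Heta0 : eta 0 = 0.
Hypothesis Hetacont : forall t, 0 <= t -> before_tinf N tt t -> cont_at eta t.
Hypothesis Hetaode : forall i t, in_I N i -> tt i < t -> before_next N tt i t ->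
  derivable_pt_lim eta t
    (- beta (eta t) + sigma * alpha (vnorm (x t)) - gamma (vnorm (e t))).
Hypothesis Htrig_next : forall i, has_next N i ->
  is_inf (fun t => tt i < t /\ exists l, left_lim e t l /\
            eta t + theta * (sigma * alpha (vnorm (x t)) - gamma (vnorm l)) <= 0)
         (tt (S i)).
Hypothesis Htrig_last : forall i, in_I N i -> ~ has_next N i ->
  forall t, tt i < t -> ~ (exists l, left_lim e t l /\
            eta t + theta * (sigma * alpha (vnorm (x t)) - gamma (vnorm l)) <= 0).

Local Notation Phi t := (eta t + theta * (sigma * alpha (vnorm (x t)) - gamma (vnorm (e t)))).

(* Between executions e = x(t_i) - x is continuous, so its left limit is its value. *)
Lemma error_left_continuous i s :
  in_I N i -> tt i < s -> before_next N tt i s -> left_lim e s (e s).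
Proof.
  intros Hi Hlt Hbn eps Heps.
  pose proof (executions_nonneg Ht0 Hincr i Hi) as Hti.
  destruct (Hxcont s ltac:(lra) (before_next_tinf i s Hbn) eps Heps) as [d [Hd Hclose]].
  exists (Rmin d (s - tt i)); split; [apply Rmin_glb_lt; lra|].
  intros r [Hr1 Hr2].
  pose proof (Rmin_l d (s - tt i)); pose proof (Rmin_r d (s - tt i)).
  rewrite (He i r Hi ltac:(lra) (before_next_mono i r s ltac:(lra) Hbn)).
  rewrite (He i s Hi ltac:(lra) Hbn) vnorm_sub_cancel.
  apply Hclose; [lra | apply Rabs_def1; lra].
Qed.

(* Step 1: the triggering quantity is positive strictly between executions, since a time
   with Phi <= 0 would belong to the set defining the next execution. *)
Lemma trigger_pos_between i s :
  in_I N i -> tt i < s -> before_next N tt i s -> 0 < Phi s.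
Proof.
  intros Hi Hlt Hbn; apply Rnot_le_lt; intro Hle.
  assert (Hfired : exists l, left_lim e s l /\
            eta s + theta * (sigma * alpha (vnorm (x s)) - gamma (vnorm l)) <= 0).
  { exists (e s); split; [exact (error_left_continuous i s Hi Hlt Hbn) | exact Hle]. }
  destruct (classic (has_next N i)) as [Hn|Hlast].
  - destruct (Htrig_next i Hn) as [Hlb _].
    assert (tt (S i) <= s) by (apply Hlb; split; [exact Hlt | exact Hfired]).
    pose proof (before_next_lt i s Hn Hbn); lra.
  - exact (Htrig_last i Hi Hlast s Hlt Hfired).
Qed.

(* Step 2: at an execution the error vanishes, so Phi(t_i) >= eta(t_i). *)
Lemma trigger_at_execution i : in_I N i -> eta (tt i) <= Phi (tt i).
Proof.
  intros Hi.
  rewrite (He i (tt i) Hi (Rle_refl _) (before_next_start Hincr i Hi)).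
  rewrite vnorm_sub_diag Hgamma0.
  pose proof (Rmult_le_pos _ _ Hsigma (Halpha _ (vnorm_ge0 (x (tt i))))).
  assert (0 <= theta * (sigma * alpha (vnorm (x (tt i))) - 0)) by (apply Rmult_le_pos; lra).
  lra.
Qed.

(* Step 3: eta remains nonnegative on [t_i, t_{i+1}) once eta(t_i) >= 0: where eta < 0,
   positivity of Phi forces sigma alpha - gamma > 0, so eta' >= -beta(eta) >= C eta. *)
Lemma eta_nonneg_on_interval i s :
  in_I N i -> 0 <= eta (tt i) -> tt i <= s -> before_next N tt i s -> 0 <= eta s.
Proof.
  intros Hi Heta Hs Hbn.
  pose proof (executions_nonneg Ht0 Hincr i Hi) as Hti.
  destruct Hbeta_der as [d Hd].
  destruct (derivable_linear_bound_left beta d Hbeta0 Hd) as [C [d0 [Hd0 Hlin]]].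
  apply (nonneg_preserved eta
           (fun t => - beta (eta t) + sigma * alpha (vnorm (x t)) - gamma (vnorm (e t)))
           (tt i) s C d0); [lra | exact Hd0 | | | | exact Heta].
  - intros r Hr; apply Hetacont; [lra|].
    apply (before_next_tinf i), (before_next_mono i r s); [lra | exact Hbn].
  - intros r Hr; apply (Hetaode i r Hi); [lra|].
    apply (before_next_mono i r s); [lra | exact Hbn].
  - intros r Hr Hneg.
    pose proof (trigger_pos_between i r Hi ltac:(lra)
                  (before_next_mono i r s ltac:(lra) Hbn)) as Hpos.
    assert (Hmargin : 0 < sigma * alpha (vnorm (x r)) - gamma (vnorm (e r))).
    { apply Rnot_le_lt; intro Hq.
      assert (theta * (sigma * alpha (vnorm (x r)) - gamma (vnorm (e r))) <= 0) by nra.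
      lra. }
    pose proof (Hlin (eta r) ltac:(lra)); lra.
Qed.

Lemma eta_nonneg_at_executions i : in_I N i -> 0 <= eta (tt i).
Proof.
  induction i as [|i IH]; intros Hi; [rewrite Ht0 Heta0; lra|].
  destruct (next_index i Hi) as [Hi' Hn].
  pose proof (Hincr i Hn); pose proof (executions_nonneg Ht0 Hincr i Hi').
  apply (nonneg_at_right_end eta (tt i)); [lra | apply Hetacont; [lra|] |].
  - exact (execution_before_tinf Hincr (S i)).
  - intros r Hr; apply (eta_nonneg_on_interval i r Hi' (IH Hi')); [lra|].
    apply before_next_of_lt; lra.
Qed.

Lemma trigger_and_eta_nonneg t :
  0 <= t -> before_tinf N tt t -> 0 <= Phi t /\ 0 <= eta t.
Proof.
  intros Ht Htinf.
  destruct (execution_interval (N := N) (tt := tt) t ltac:(rewrite Ht0; lra) Htinf) as [i [Hi [Hti Hbn]]].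
  assert (Heta : 0 <= eta t)
    by exact (eta_nonneg_on_interval i t Hi (eta_nonneg_at_executions i Hi) Hti Hbn).
  split; [|exact Heta].
  destruct (Req_dec t (tt i)) as [->|Hne].
  - pose proof (trigger_at_execution i Hi); lra.
  - pose proof (trigger_pos_between i t Hi ltac:(lra) Hbn); lra.
Qed.

End DynamicEventGenerator.


Theorem lemma1
  (n m : nat)
  (f : vec n -> vec m -> vec n) (k : vec n -> vec m)
  (V : vec n -> R) (alpha_l alpha_u alpha gamma : R -> R)
  (* V is a smooth ISS-Lyapunov function for xdot = f(x, k(x+e)) *)
  (HVsmooth : smooth_vec V)
  (HVpos : forall x, 0 <= V x)
  (Hal : class_Kinf alpha_l) (Hau : class_Kinf alpha_u)
  (Ha : class_Kinf alpha) (Hg : class_Kinf gamma)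
  (Hsand : forall x, alpha_l (vnorm x) <= V x <= alpha_u (vnorm x))
  (HISS : forall (x e : vec n) (gradV : vec n),
      (forall i, has_partial V i x (gradV i)) ->
      vdot gradV (f x (k (vadd x e))) <= - alpha (vnorm x) + gamma (vnorm e))
  (* design parameters of the dynamic event generator *)
  (beta : R -> R) (sigma theta : R)
  (Hbsmooth : smooth_R beta) (Hb : class_Kinf beta)
  (Hsigma : 0 < sigma < 1) (Htheta : 0 <= theta)
  (* execution times t_i, i in the index set given by N *)
  (N : option nat) (tt : nat -> R)
  (* trajectories: state x, error e, internal variable eta *)
  (x e : R -> vec n) (eta : R -> R)
  (Ht0 : tt O = 0)
  (Hincr : forall i, has_next N i -> tt i < tt (S i))
  (* plant with sample-and-hold input u(t) = k(x(t_i)) on [t_i, t_{i+1}) *)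
  (Hxcont : forall t, 0 <= t -> before_tinf N tt t -> vcont_at x t)
  (Hxode : forall i t, in_I N i -> tt i < t -> before_next N tt i t ->
      forall j, derivable_pt_lim (fun s => x s j) t (f (x t) (k (x (tt i))) j))
  (He : forall i t, in_I N i -> tt i <= t -> before_next N tt i t ->
      e t = vsub (x (tt i)) (x t))
  (* internal variable of the dynamic event generator *)
  (Heta0 : eta 0 = 0)
  (Hetacont : forall t, 0 <= t -> before_tinf N tt t -> cont_at eta t)
  (Hetaode : forall i t, in_I N i -> tt i < t -> before_next N tt i t ->
      derivable_pt_lim eta t
        (- beta (eta t) + sigma * alpha (vnorm (x t)) - gamma (vnorm (e t))))
  (* triggering rule: t_{i+1} = inf { t > t_i : eta(t) + theta (sigma alpha(|x(t)|)
     - gamma(|e(t^-)|)) <= 0 }, with inf of the empty set = +oo *)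
  (Htrig_next : forall i, has_next N i ->
      is_inf (fun t => tt i < t /\ exists l, left_lim e t l /\
                eta t + theta * (sigma * alpha (vnorm (x t)) - gamma (vnorm l)) <= 0)
             (tt (S i)))
  (Htrig_last : forall i, in_I N i -> ~ has_next N i ->
      forall t, tt i < t -> ~ (exists l, left_lim e t l /\
                eta t + theta * (sigma * alpha (vnorm (x t)) - gamma (vnorm l)) <= 0))
  (Hxnz : forall i, in_I N i -> x (tt i) <> vzero) :
  forall t, 0 <= t -> before_tinf N tt t ->
    eta t + theta * (sigma * alpha (vnorm (x t)) - gamma (vnorm (e t))) >= 0 /\
    eta t >= 0.
Proof.
  intros t Ht Htinf.
  destruct (trigger_and_eta_nonneg (Kinf_nonneg Ha) (proj1 Hg) (proj1 Hb)
              (smooth_R_derivable Hbsmooth 0) (Rlt_le _ _ (proj1 Hsigma)) Htheta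
              Ht0 Hincr Hxcont He Heta0 Hetacont Hetaode Htrig_next Htrig_last t Ht Htinf)
    as [Hphi Heta].
  split; lra.
Qed.
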